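(* Let $U=(U(n))_{n\ge0}$ be defined by $U(0)=1$ and $U(n+1)=3U(n)+1$ for $n\ge0$. Let $\mathbf{x}$ be the fixed point starting with $a$ of the morphism $a\mapsto aaab$, $b\mapsto b$, and let $\tau$ be the coding $a\mapsto0$, $b\mapsto1$. Then the binary sequence $\tau(\mathbf{x})$ satisfies $C_2(\tau(\mathbf{x}),N)\gg N$, i.e., there is $c>0$ with $C_2(\tau(\mathbf{x}),N)\ge cN$ for all sufficiently large $N$.
   Context: Correlation measure: for $\mathbf{s}$ over $\{0,1\}$, $D=(d_1,d_2)$ with $0\le d_1<d_2$ and $M\in\mathbb{N}$, put $V(\mathbf{s},M,D)=\sum_{n=0}^{M-1}(-1)^{\mathbf{s}(n+d_1)+\mathbf{s}(n+d_2)}$, and $C_2(\mathbf{s},N)=\max_{M,D}|V(\mathbf{s},M,D)|$ over all such $D$ and integers $M$ with $M+d_2\le N$. (For reference: $\tau(\mathbf{x})(n)$ is the output, on the greedy $U$-representation of $n$, of the DFAO with states $A$ (initial, output 0), $B$ (output 0), $C$ (output 1) and transitions $A\xrightarrow{1,2}B$, $A\xrightarrow{3}C$, $B\xrightarrow{0,1,2}B$, $B\xrightarrow{3}C$, $C\xrightarrow{0}C$.) *)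

From mathcomp Require Import all_boot all_order all_algebra.
Set Implicit Arguments. Unset Strict Implicit. Unset Printing Implicit Defensive.
Import Order.TTheory GRing.Theory Num.Theory.

Inductive letter := La | Lb.

Definition phi_letter (l : letter) : seq letter :=
  match l with La => [:: La; La; La; Lb] | Lb => [:: Lb] end.
Definition phi (w : seq letter) : seq letter := flatten (map phi_letter w).

(* The fixed point x of phi starting with a: x(n) is the n-th letter of
   phi^(n+1)(a); phi^k(a) is a prefix of phi^(k+1)(a) and has length > k,
   so this is the limit word lim_k phi^k(a). *)
Definition xfix (n : nat) : letter := nth La (iter n.+1 phi [:: La]) n.

Definition tau (l : letter) : nat := match l with La => 0 | Lb => 1 end.
Definition tx (n : nat) : nat := tau (xfix n).

Definition corrV (s : nat -> nat) (M d1 d2 : nat) : int :=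
  \sum_(n < M) ((-1) : int) ^+ (s (n + d1)%N + s (n + d2)%N)%N.

Definition C2 (s : nat -> nat) (N : nat) : nat :=
  \max_(d2 < N.+1) \max_(d1 < d2) \max_(M < N.+1 | M + d2 <= N)
     `|corrV s M d1 d2|%N.

From mathcomp Require Import all_boot all_order all_algebra.
From mathcomp Require Import zify lra.
Set Implicit Arguments. Unset Strict Implicit. Unset Printing Implicit Defensive.
Import Order.TTheory GRing.Theory Num.Theory.

(* Since phi^(k+1)(a) = phi^k(a) phi^k(a) phi^k(a) b and phi^k(a) has length
   U(k), the first 3 U(k) letters of x are periodic with period U(k).  Hence
   the correlation with shift D = (0, U(k)) over M = 2 U(k) terms is exactly
   2 U(k), and choosing k with 3 U(k) <= N < 3 U(k+1) <= 12 U(k) gives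
   C_2(tau(x), N) >= N / 6. *)

Fixpoint U (k : nat) : nat := if k is k'.+1 then 3 * U k' + 1 else 1.

Lemma ltn_U k : k < U k.
Proof. by elim: k => [|k IHk] //=; lia. Qed.

Lemma U_bracket N : 3 <= N -> exists k, 3 * U k <= N <= 12 * U k.
Proof.
elim: N => [|N IHN] // le3N.
have [leN2 | lt2N] := leqP N 2; first by exists 0 => /=; lia.
have [k /andP[le3UN leN12U]] := IHN lt2N.
have [leN1 | ltN1] := leqP N.+1 (12 * U k); first by exists k; lia.
by exists k.+1 => /=; lia.
Qed.

Definition phik (k : nat) : seq letter := iter k phi [:: La].

Lemma phi_cat s t : phi (s ++ t) = phi s ++ phi t.
Proof. by rewrite /phi map_cat flatten_cat. Qed.

Lemma phikS k : phik k.+1 = phik k ++ phik k ++ phik k ++ [:: Lb].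
Proof.
have phi_phik j : phi (phik j) = phik j.+1 by [].
by elim: k => [|k IHk] //; rewrite -phi_phik {1}IHk !phi_cat phi_phik.
Qed.

Lemma size_phik k : size (phik k) = U k.
Proof. by elim: k => [|k IHk] //; rewrite phikS !size_cat IHk /=; lia. Qed.

Lemma phik_prefix m n : m <= n -> exists t, phik n = phik m ++ t.
Proof.
move/subnKC <-; elim: (n - m) => [|j [t IHj]].
  by exists [::]; rewrite addn0 cats0.
exists (t ++ phik (m + j) ++ phik (m + j) ++ [:: Lb]).
by rewrite addnS phikS {1}IHj -catA.
Qed.

Lemma nth_phik_stable m k n :
  n < size (phik m) -> n < size (phik k) -> nth La (phik m) n = nth La (phik k) n.
Proof.
wlog le_mk : m k / m <= k => [hyp ltm ltk|ltm _].
  by have [/hyp->|/ltnW/hyp->] := leqP m k.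
by have [t ->] := phik_prefix le_mk; rewrite nth_cat ltm.
Qed.

Lemma xfix_phik k n : n < size (phik k) -> xfix n = nth La (phik k) n.
Proof. by apply: (@nth_phik_stable n.+1); rewrite size_phik (ltnW (ltn_U _)). Qed.

Lemma nth_phikS_periodic k n :
  n < 2 * U k -> nth La (phik k.+1) (n + U k) = nth La (phik k.+1) n.
Proof.
move=> ltn2U.
have lt_n_2 : n < size (phik k ++ phik k) by rewrite size_cat size_phik; lia.
have drop_phik : drop (U k) (phik k.+1) = (phik k ++ phik k) ++ [:: Lb].
  by rewrite phikS drop_size_cat ?size_phik // catA.
by rewrite addnC -nth_drop drop_phik phikS catA !nth_cat lt_n_2.
Qed.

Lemma tx_periodic k n : n < 2 * U k -> tx (n + U k) = tx n.
Proof.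
move=> ltn2U; have size_phikS : size (phik k.+1) = 3 * U k + 1 by rewrite size_phik.
rewrite /tx (@xfix_phik k.+1) ?size_phikS; last by lia.
by rewrite (@xfix_phik k.+1) ?size_phikS ?nth_phikS_periodic //; lia.
Qed.

Lemma corrV_shift_invariant s M d1 d2 :
  (forall n, n < M -> s (n + d1) = s (n + d2)) -> corrV s M d1 d2 = Posz M.
Proof.
move=> sE; rewrite /corrV (eq_bigr (fun=> 1%R)) => [|[n ltnM] _].
  by rewrite sumr_const card_ord natz.
by rewrite sE // addnn -muln2 exprM sqrr_sign.
Qed.

Lemma leq_corrV_C2 s N M d1 d2 :
  d1 < d2 -> M + d2 <= N -> `|corrV s M d1 d2|%N <= C2 s N.
Proof.
move=> lt_d12 leMN.
have ltd2 : d2 < N.+1 by lia.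
have ltM : M < N.+1 by lia.
apply: leq_trans (leq_bigmax (Ordinal ltd2)) => /=.
apply: leq_trans (leq_bigmax (Ordinal lt_d12)) => /=.
exact: leq_bigmax_cond (Ordinal ltM) _.
Qed.

Lemma C2_tx_ge k N : 3 * U k <= N -> 2 * U k <= C2 tx N.
Proof.
move=> le3UN; have U_gt0 : 0 < U k by have := ltn_U k; lia.
have := leq_corrV_C2 tx U_gt0 (_ : 2 * U k + U k <= N).
rewrite corrV_shift_invariant => [|n ltn2U]; last by rewrite addn0 tx_periodic.
by rewrite absz_nat; apply; lia.
Qed.

Theorem mainTheorem7 :
  exists c : rat, (0 < c)%R /\
    exists N0 : nat, forall N : nat, (N0 <= N)%N ->
      (c * N%:R <= (C2 tx N)%:R)%R.
Proof.
exists (1/6)%R; split=> //; exists 3 => N le3N.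
have [k /andP[le3UN leN12U]] := U_bracket le3N.
have leN6C : ((N%:R : rat) <= 6 * (C2 tx N)%:R)%R.
  by rewrite -natrM ler_nat; have := C2_tx_ge le3UN; lia.
lra.
Qed.
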